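(* The sub-set-operad of $\mathrm{RWS}$ generated by $A_\prec$ and $A_\succ$ consists exactly of the recursively labelled red and white trees in which every node has exactly one label (no empty nodes and no node with two or more labels).
   Context: Red and white trees: $\mathrm{RW}(n)$ is the set of finite rooted trees (children unordered) whose nodes $z$ carry possibly empty label sets $L(z)\subseteq[n]$ partitioning $[n]$, each empty node having at least two children; labelled nodes are white, an empty node is red iff all its children are white. Composition $T_1\circ_xT_2$ ($T_1\in\mathrm{RW}(m)$, $T_2\in\mathrm{RW}(n)$): relabel $T_1$ by $y\mapsto y+n-1$ for $y>x$ and $T_2$ by $y\mapsto y+x-1$; $z\ni x$ in $T_1$, $r$ = root of $T_2$. (W) $r$ not red: remove $x$ from $L(z)$, add $L(r)$ to $L(z)$, children of $r$ become children of $z$. (R1) $r$ red, $T_1$ the single node $\{x\}$: result $T_2$. (R2) $r$ red and ($z$ has a child or $|L(z)|\ge2$): remove $x$ from $L(z)$, attach $T_2$ as child subtree of $z$. (R3) $r$ red, $z$ non-root leaf with $L(z)=\{x\}$: delete $z$, children of $r$ become children of the parent of $z$. Colours recomputed. A tree is recursively labelled if for each node the union of label sets in its subtree is an interval of integers. $\mathrm{RWS}$ is the sub-set-operad generated by $A_\mu$ (single node $\{1,2\}$), $A_\prec$ (root $\{1\}$ with child $\{2\}$), $A_\succ$ (root $\{2\}$ with child $\{1\}$), $A_\odot$ (empty red root with children $\{1\},\{2\}$). *)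

From Stdlib Require Import List Permutation.
From mathcomp Require Import all_boot.
Set Implicit Arguments.
Unset Strict Implicit.
Unset Printing Implicit Defensive.

(* A rooted tree: a node carries a (finite, duplicate-free in well-formed
   trees) label set, represented as a list, and a list of children.  Children
   are unordered and label sets are sets: this is accounted for by the
   isomorphism relation [tiso] below. *)
Inductive tree : Type := Node of seq nat & seq tree.

Definition tlab (t : tree) : seq nat := let: Node L _ := t in L.
Definition tch (t : tree) : seq tree := let: Node _ cs := t in cs.

Fixpoint labels (t : tree) : seq nat :=
  let: Node L cs := t in L ++ flatten (map labels cs).

Fixpoint nodes (t : tree) : seq tree :=
  let: Node L cs := t in Node L cs :: flatten (map nodes cs).

Inductive tiso : tree -> tree -> Prop :=
| tiso_node L1 L2 cs1 cs2 cs :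
    perm_eq L1 L2 -> Permutation cs2 cs -> Forall2 tiso cs1 cs ->
    tiso (Node L1 cs1) (Node L2 cs2).

Definition RW (n : nat) (t : tree) : Prop :=
  perm_eq (labels t) (iota 1 n) /\
  (forall s, In s (nodes t) -> tlab s = [::] -> 2 <= size (tch s)).

Definition white (t : tree) : bool := tlab t != [::].
Definition red (t : tree) : bool := (tlab t == [::]) && all white (tch t).

Fixpoint relabel (f : nat -> nat) (t : tree) : tree :=
  let: Node L cs := t in Node (map f L) (map (relabel f) cs).

(* Grafting [t2] (already relabelled) at the node of [t] containing label x.
   Returns the list of trees replacing [t] among its siblings (needed for
   rule R3, where the node z is replaced by the children of the root r). *)
Fixpoint graft (x : nat) (t2 : tree) (t : tree) : seq tree :=
  let: Node L cs := t in
  if x \in L then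
    if ~~ red t2 then
      [:: Node (rem x L ++ tlab t2) (cs ++ tch t2)]
    else if (0 < size cs) || (1 < size L) then
      [:: Node (rem x L) (rcons cs t2)]
    else (* (R3): z is a leaf with L(z) = {x} *)
      tch t2
  else [:: Node L (flatten (map (graft x t2) cs))].

(* T1 o_x T2 with T1 in RW(m), T2 in RW(n) *)
Definition comp (n x : nat) (t1 t2 : tree) : tree :=
  let t1' := relabel (fun y => if x < y then y + n - 1 else y) t1 in
  let t2' := relabel (fun y => y + x - 1) t2 in
  if red t2' && (tlab t1' == [:: x]) && (size (tch t1') == 0)
    then t2'
  else match graft x t2' t1' with
       | [:: t] => t
       | _ => t1' (* unreachable on the root *)
       end.

Definition A_prec : tree := Node [:: 1] [:: Node [:: 2] [::]].
Definition A_succ : tree := Node [:: 2] [:: Node [:: 1] [::]].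
Definition unit_tree : tree := Node [:: 1] [::].

Inductive gen_prec_succ : nat -> tree -> Prop :=
| gen_unit : gen_prec_succ 1 unit_tree
| gen_prec : gen_prec_succ 2 A_prec
| gen_succ : gen_prec_succ 2 A_succ
| gen_comp m n x t1 t2 :
    gen_prec_succ m t1 -> gen_prec_succ n t2 -> 1 <= x <= m ->
    gen_prec_succ (m + n - 1) (comp n x t1 t2)
| gen_iso n t t' : gen_prec_succ n t -> tiso t t' -> gen_prec_succ n t'.

Definition is_interval (s : seq nat) : Prop :=
  forall i j k, i \in s -> k \in s -> i <= j <= k -> j \in s.

Definition recursively_labelled (t : tree) : Prop :=
  forall s, In s (nodes t) -> is_interval (labels s).

Definition one_label_per_node (t : tree) : Prop :=
  forall s, In s (nodes t) -> size (tlab s) = 1.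

(* When the grafted tree has a
     single-labelled root, [comp] is grafting by rule (W) (comp_W), which
     merges the root into the node carrying x; both relabellings preserve
     the interval nodes and the merged node still has an interval of labels
     (single_interval_graft), so composites of RLS trees are RLS (RLS_comp).
   - Every RLS tree is generated (RLS_gen), by strong induction on n.  A
     leaf is the unit.  Otherwise the child holding n (when the root is 1) or
     the child holding 1 (otherwise) carries a final, resp. initial, segment
     of 1..n, and the tree is isomorphic to (A_prec o_2 C) o_1 R, resp.
     (A_succ o_1 C) o_(p+1) R, for smaller RLS trees C and R
     (gen_attach_high, gen_attach_low, gen_top_child, gen_bottom_child). *)

From Pilot Require Import Defs.
From Stdlib Require Import List Permutation.
From mathcomp Require Import all_boot zify.
Set Implicit Arguments.
Unset Strict Implicit.

(* Induction on trees with one hypothesis per child: the children of a node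
   are stored in a list, so the generated principle [tree_ind] has no
   induction hypotheses at all. *)
Definition tree_ind_In (P : tree -> Prop)
    (IH : forall L cs, (forall c, In c cs -> P c) -> P (Node L cs)) :
    forall t, P t :=
  fix F t := let: Node L cs := t in IH L cs
    ((fix G (cs : seq tree) : forall c, In c cs -> P c :=
        match cs with
        | [::] => fun c (h : In c [::]) => False_ind _ h
        | c0 :: cs' => fun c h => match h with
            | or_introl e => eq_ind _ P (F c0) _ e
            | or_intror h' => G cs' c h' end end) cs).

Lemma eq_map_In (A B : Type) (f g : A -> B) (l : seq A) :
  (forall a, In a l -> f a = g a) -> map f l = map g l.
Proof. exact: map_ext_in. Qed.

Lemma In_flatten_map (A B : Type) (g : A -> seq B) u cs :
  In u (flatten (map g cs)) <-> exists c, In c cs /\ In u (g c).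
Proof. by rewrite -in_flat_map flat_map_concat_map. Qed.

Lemma mem_flatten_map (A : Type) (T : eqType) (f : A -> seq T) y cs :
  y \in flatten (map f cs) -> exists c, In c cs /\ y \in f c.
Proof.
elim: cs => [|c cs IH] //=; rewrite mem_cat => /orP [h|/IH [c' [h1 h2]]].
  by exists c; split; [left|].
by exists c'; split; [right|].
Qed.

Lemma perm_flatten_map_In (A : Type) (T : eqType) (f : A -> seq T) c cs :
  In c cs -> exists l, perm_eq (flatten (map f cs)) (f c ++ l).
Proof.
move=> hc; have [l1 [l2 ->]] := in_split _ _ hc.
exists (flatten (map f l1) ++ flatten (map f l2)).
by rewrite map_cat flatten_cat /= perm_catCA.
Qed.

Lemma flatten_map_In_mem (A : Type) (T : eqType) (f : A -> seq T) c cs y :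
  In c cs -> y \in f c -> y \in flatten (map f cs).
Proof.
by move=> /(perm_flatten_map_In f) [l e] h; rewrite (perm_mem e) mem_cat h.
Qed.

Lemma perm_flatten_map_Permutation (A : Type) (T : eqType) (f : A -> seq T)
    l1 l2 :
  Permutation l1 l2 -> perm_eq (flatten (map f l1)) (flatten (map f l2)).
Proof.
elim=> //= [x l l' _ h|x y l|l l' l'' _ h1 _ h2].
- by rewrite perm_cat2l.
- by rewrite perm_catCA.
- exact: perm_trans h1 h2.
Qed.

Lemma labels_node t : labels t = tlab t ++ flatten (map labels (tch t)).
Proof. by case: t. Qed.

Lemma nodes_self t : In t (nodes t).
Proof. by case: t => L cs; left. Qed.

Lemma nodes_child c L cs u :
  In c cs -> In u (nodes c) -> In u (nodes (Node L cs)).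
Proof. by move=> hc hu; right; apply/In_flatten_map; exists c. Qed.

Lemma nodes_tch c t : In c (tch t) -> In c (nodes t).
Proof. by case: t => L cs /= hc; apply: nodes_child hc (nodes_self c). Qed.

Lemma nodes_trans u v t : In u (nodes v) -> In v (nodes t) -> In u (nodes t).
Proof.
move=> huv; elim/tree_ind_In: t => L cs IH [->|] //.
by case/In_flatten_map=> c [hc hv]; apply: nodes_child hc (IH c hc hv).
Qed.

Lemma labels_nodes_perm u t :
  In u (nodes t) -> exists l, perm_eq (labels t) (labels u ++ l).
Proof.
elim/tree_ind_In: t => L cs IH /= [<-|]; first by exists [::]; rewrite cats0.
case/In_flatten_map=> c [hc hu].
have [l1 e1] := IH c hc hu; have [l2 e2] := perm_flatten_map_In labels hc.
exists (l1 ++ L ++ l2).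
rewrite (perm_trans (perm_cat (perm_refl L) e2)) //.
rewrite (perm_trans (perm_cat (perm_refl L) (perm_cat e1 (perm_refl l2)))) //.
by rewrite -catA perm_catCA perm_cat2l perm_catCA.
Qed.

Lemma nodes_uniq u t : In u (nodes t) -> uniq (labels t) -> uniq (labels u).
Proof.
by move=> /labels_nodes_perm [l e]; rewrite (perm_uniq e) cat_uniq => /andP [].
Qed.

Lemma nodes_mem u t y : In u (nodes t) -> y \in labels u -> y \in labels t.
Proof. by move=> /labels_nodes_perm [l e] h; rewrite (perm_mem e) mem_cat h. Qed.

Lemma labels_relabel f t : labels (relabel f t) = map f (labels t).
Proof.
elim/tree_ind_In: t => L cs IH /=; rewrite map_cat map_flatten -!map_comp.
by congr (_ ++ flatten _); apply: eq_map_In.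
Qed.

Lemma tlab_relabel f t : tlab (relabel f t) = map f (tlab t).
Proof. by case: t. Qed.

Lemma nodes_relabel f t u : In u (nodes (relabel f t)) ->
  exists u0, In u0 (nodes t) /\ u = relabel f u0.
Proof.
elim/tree_ind_In: t => L cs IH /= [<-|].
  by exists (Node L cs); split; [left|].
case/In_flatten_map=> _ [/in_map_iff [c [<- hc]] hu].
have [u0 [h1 ->]] := IH c hc hu.
by exists u0; split=> //; apply: nodes_child hc h1.
Qed.

Lemma relabel_ext_in f g t : {in labels t, f =1 g} -> relabel f t = relabel g t.
Proof.
elim/tree_ind_In: t => L cs IH /= h; congr Node.
  by apply/eq_in_map => y hy; apply: h; rewrite mem_cat hy.
apply: eq_map_In => c hc; apply: IH => // y hy.
by apply: h; rewrite mem_cat (flatten_map_In_mem hc hy) orbT.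
Qed.

Lemma relabel_id_in f t : {in labels t, f =1 id} -> relabel f t = t.
Proof.
move/relabel_ext_in=> ->; elim/tree_ind_In: t => L cs IH /=.
by rewrite map_id -[in RHS](map_id cs); congr Node; apply: eq_map_In.
Qed.

Lemma relabel_comp f g t : relabel f (relabel g t) = relabel (f \o g) t.
Proof.
elim/tree_ind_In: t => L cs IH /=; rewrite -!map_comp.
by congr Node; apply: eq_map_In.
Qed.

Lemma tiso_refl t : tiso t t.
Proof.
elim/tree_ind_In: t => L cs IH; apply: (tiso_node (cs := cs)) => //.
elim: cs IH => [|c cs IHc] IH; constructor; first by apply: IH; left.
by apply: IHc => c' h; apply: IH; right.
Qed.

Lemma tiso_labels_nodes a b : tiso a b ->
  perm_eq (labels a) (labels b) /\
  forall u, In u (nodes b) -> exists v, In v (nodes a) /\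
    perm_eq (tlab v) (tlab u) /\ perm_eq (labels v) (labels u).
Proof.
elim/tree_ind_In: a b => L1 cs1 IH b hab.
inversion hab as [L1' L2 cs1' cs2 cs hL hP hF e1 e2]; subst.
have hcs : perm_eq (flatten (map labels cs1)) (flatten (map labels cs2)).
  apply: (perm_trans (y := flatten (map labels cs))); last first.
    by rewrite perm_sym; apply: perm_flatten_map_Permutation.
  elim: hF IH {hab} => //= x y l l' hxy _ IHF IH.
  apply: perm_cat; first by have [] := IH x (or_introl erefl) y hxy.
  by apply: IHF => c hc; apply: IH; right.
have hroot : perm_eq (labels (Node L1 cs1)) (labels (Node L2 cs2)).
  exact: perm_cat.
split=> // u /= [<-|]; first by exists (Node L1 cs1); split; [left|].
case/In_flatten_map=> c' [hc' hu].
have [c [hc hcc]] : exists c, In c cs1 /\ tiso c c'.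
  move: (Permutation_in _ hP hc').
  elim: hF {IH hab hc'} => // x y l l' hxy _ IHF /=.
  by case=> [<-|/IHF [c [hc hcc]]]; [exists x; auto|exists c; auto].
have [v [hv hv']] := (IH c hc c' hcc).2 u hu.
by exists v; split=> //; apply: nodes_child hc hv.
Qed.

Lemma interval_perm s s' : perm_eq s s' -> is_interval s -> is_interval s'.
Proof. by move=> e h i j k; rewrite -!(perm_mem e); apply: h. Qed.

Lemma interval_iota a k : is_interval (iota a k).
Proof. move=> i j l; rewrite !mem_iota; lia. Qed.

Lemma mem_perm_iota s a k y :
  perm_eq s (iota a k) -> (y \in s) = (a <= y < a + k).
Proof. by move=> e; rewrite (perm_mem e) mem_iota. Qed.

Lemma interval_perm_iota S : uniq S -> is_interval S -> S != [::] ->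
  exists a, perm_eq S (iota a (size S)).
Proof.
move=> hu hI hS.
have exS : exists y, y \in S.
  by case: S hS {hu hI} => // y S _; exists y; rewrite mem_head.
case: (ex_minnP exS) => a ha hmin; exists a.
apply: uniq_perm => //; first exact: iota_uniq.
suff hsub : {subset S <= iota a (size S)}.
  by have [] := uniq_min_size hu hsub; rewrite ?size_iota.
move=> y hy; rewrite mem_iota; have := hmin _ hy => hay.
have hs : {subset iota a (y - a).+1 <= S}.
  by move=> z; rewrite mem_iota => hz; apply: (hI a z y) => //; lia.
have := uniq_leq_size (iota_uniq a (y - a).+1) hs; rewrite size_iota; lia.
Qed.

(* The invariant RLS ("recursively labelled, single-labelled"): labels are
   1..n, every node has exactly one label and its subtree labels form an
   interval. *)
Definition single_interval (u : tree) : Prop :=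
  size (tlab u) = 1 /\ is_interval (labels u).

Definition RLS (n : nat) (t : tree) : Prop :=
  perm_eq (labels t) (iota 1 n) /\ forall u, In u (nodes t) -> single_interval u.

Lemma RLS_iff n t :
  RLS n t <-> RW n t /\ recursively_labelled t /\ one_label_per_node t.
Proof.
split=> [[hl hP]|[[hl _] [hI h1]]].
  split; last by split=> s hs; case: (hP s hs).
  by split=> // s hs e; case: (hP s hs); rewrite e.
by split=> // u hu; split; [apply: h1|apply: hI].
Qed.

Lemma RLS_tiso n a b : RLS n a -> tiso a b -> RLS n b.
Proof.
move=> [hl hP] /tiso_labels_nodes [e H]; split.
  by apply: perm_trans hl; rewrite perm_sym.
move=> u hu; have [v [hv [e1 e2]]] := H u hu; have [p1 p2] := hP v hv.
by split; [rewrite -(perm_size e1)|apply: interval_perm e2 p2].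
Qed.

Lemma RLS_root n t : RLS n t -> size (tlab t) = 1.
Proof. by move=> [_ h]; case: (h t (nodes_self t)). Qed.

Lemma RLS_mem n t y : RLS n t -> y \in labels t -> 1 <= y <= n.
Proof. by move=> [h _]; rewrite (mem_perm_iota _ h); lia. Qed.

Lemma RLS_uniq n t : RLS n t -> uniq (labels t).
Proof. by move=> [h _]; rewrite (perm_uniq h) iota_uniq. Qed.

Lemma RLS_pos n t : RLS n t -> 0 < n.
Proof.
move=> g; have := perm_size g.1; have := RLS_root g.
by rewrite size_iota labels_node size_cat => ->; lia.
Qed.

Lemma RLS_node_iota n t u : RLS n t -> In u (nodes t) ->
  exists a, perm_eq (labels u) (iota a (size (labels u))).
Proof.
move=> g hu; have [hs hI] := g.2 u hu; apply: interval_perm_iota => //.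
  exact: nodes_uniq hu (RLS_uniq g).
by rewrite labels_node; case: (tlab u) hs.
Qed.

(* Grafting by rule (W) alone: the root of [t2] is merged into the node of
   [t] carrying [x].  When [t2] is not red this is exactly [graft]. *)
Fixpoint graftW (x : nat) (t2 : tree) (t : tree) : tree :=
  let: Node L cs := t in
  if x \in L then Node (rem x L ++ tlab t2) (cs ++ tch t2)
  else Node L (map (graftW x t2) cs).

Lemma rem_cat (T : eqType) (x : T) (s1 s2 : seq T) :
  rem x (s1 ++ s2) = if x \in s1 then rem x s1 ++ s2 else s1 ++ rem x s2.
Proof.
elim: s1 => [|a s1 IH] //=; rewrite in_cons IH eq_sym.
by case: eqP => //= _; case: (x \in s1).
Qed.

Section GraftW.
Variables (x : nat) (t2 : tree).

Lemma graft_W t : ~~ red t2 -> graft x t2 t = [:: graftW x t2 t].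
Proof.
move=> hr; elim/tree_ind_In: t => L cs IH /=.
case: (x \in L); first by rewrite hr.
rewrite (eq_map_In (g := fun c => [:: graftW x t2 c]) IH).
by rewrite (map_comp (fun y => [:: y])) flatten_seq1.
Qed.

Lemma graftW_notin t : x \notin labels t -> graftW x t2 t = t.
Proof.
elim/tree_ind_In: t => L cs IH /=.
rewrite mem_cat negb_or => /andP [/negbTE -> hcs].
rewrite -[in RHS](map_id cs); congr Node; apply: eq_map_In => c hc.
by apply: IH => //; apply: contra hcs; apply: flatten_map_In_mem.
Qed.

Lemma labels_graftW t : uniq (labels t) -> x \in labels t ->
  perm_eq (labels (graftW x t2 t)) (rem x (labels t) ++ labels t2).
Proof.
elim/tree_ind_In: t => L cs IH /= hu; rewrite rem_cat mem_cat.
case hL: (x \in L) => /= hx.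
  by rewrite (labels_node t2) map_cat flatten_cat -!catA perm_cat2l perm_catCA.
rewrite -catA perm_cat2l.
move: hu; rewrite cat_uniq => /and3P [_ _].
elim: cs IH hx => [|c cs IHc] IH //= hx; rewrite cat_uniq => /and3P [hu1 hu2 hu3].
move: hx; rewrite rem_cat mem_cat; case hc: (x \in labels c) => /= hx.
  have hx' : x \notin flatten (map labels cs).
    by apply/negP => h; move/hasP: hu2; apply; exists x.
  have -> : map (graftW x t2) cs = cs.
    rewrite -[in RHS](map_id cs); apply: eq_map_In => d hd; apply: graftW_notin.
    by apply: contra hx'; apply: flatten_map_In_mem.
  rewrite perm_sym perm_catAC perm_cat2r perm_sym.
  by apply: IH => //; left.
rewrite graftW_notin ?hc // -catA perm_cat2l.
by apply: IHc => // c' h; apply: IH; right.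
Qed.

Lemma nodes_graftW t u : uniq (labels t) -> In u (nodes (graftW x t2 t)) ->
  (In u (nodes t) /\ x \notin labels u) \/
  (exists s, In s (nodes t) /\ x \in labels s /\ u = graftW x t2 s) \/
  (exists c, In c (tch t2) /\ In u (nodes c)).
Proof.
elim/tree_ind_In: t => L cs IH hu.
rewrite [graftW _ _ _]/=; case hL: (x \in L).
  move=> /= [e|].
    right; left; exists (Node L cs).
    by rewrite /= mem_cat hL -e; split=> //; left.
  case/In_flatten_map=> c [/in_app_iff hc hu'].
  case: hc => hc; last by right; right; exists c.
  left; split; first exact: nodes_child hc hu'.
  apply/negP => hxu; move: hu; rewrite /= cat_uniq => /and3P [_ /hasP hh _].
  by apply: hh; exists x => //; apply: flatten_map_In_mem hc (nodes_mem hu' hxu).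
move=> /= [e|].
  case hx: (x \in labels (Node L cs)).
    by right; left; exists (Node L cs); rewrite /= hL; split=> //; left.
  left; move: e; have /= := graftW_notin (negbT hx); rewrite hL => [[->]] <-.
  by split; [left|rewrite hx].
case/In_flatten_map=> _ [/in_map_iff [c [<- hc]] hu'].
have huc : uniq (labels c).
  by apply: nodes_uniq hu; apply: nodes_child hc (nodes_self c).
case: (IH c hc huc hu') => [[h1 h2]|[[s [h1 h2]]|h]].
- by left; split=> //; apply: nodes_child hc h1.
- by right; left; exists s; split=> //; apply: nodes_child hc h1.
- by right; right.
Qed.

End GraftW.

(* The two relabellings performed by [comp n x]: labels of the outer tree
   above [x] move up by [n - 1], labels of the inner tree move up by [x - 1]. *)
Definition shift_out (n x y : nat) : nat := if x < y then y + n - 1 else y.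
Definition shift_in (x y : nat) : nat := y + x - 1.

Lemma shift_out_inj n x : 0 < n -> injective (shift_out n x).
Proof. by move=> hn a b; rewrite /shift_out; case: ifP; case: ifP; lia. Qed.

Lemma shift_in_inj x : 0 < x -> injective (shift_in x).
Proof. by move=> hx a b; rewrite /shift_in; lia. Qed.

(* A tree whose root carries a single label is not red, so [comp] grafts it
   by rule (W). *)
Lemma single_root_not_red t : size (tlab t) = 1 -> ~~ red t.
Proof. by case: t => [[|a [|b L]] cs]. Qed.

Lemma comp_W n x t1 t2 : size (tlab t2) = 1 -> Defs.comp n x t1 t2 =
  graftW x (relabel (shift_in x) t2) (relabel (shift_out n x) t1).
Proof.
move=> h2; have /negbTE hr : ~~ red (relabel (shift_in x) t2).
  by apply: single_root_not_red; rewrite tlab_relabel size_map.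
by rewrite /Defs.comp /= -/(shift_in x) -/(shift_out n x) hr /= graft_W ?hr.
Qed.

Lemma single_interval_shift_out n x u : 0 < n -> single_interval u ->
  x \notin labels u -> single_interval (relabel (shift_out n x) u).
Proof.
move=> hn [h1 h2] hx; split; first by rewrite tlab_relabel size_map.
rewrite labels_relabel => i j k /mapP [i0 hi ->] /mapP [k0 hk ->].
have hxS : ~~ (i0 <= x <= k0).
  by apply/negP => /(h2 _ _ _ hi hk) h; rewrite h in hx.
rewrite /shift_out; case: ifP => hi0; case: ifP => hk0 hj; try lia.
- apply/mapP; exists (j - n + 1); first by apply: (h2 _ _ _ hi hk); lia.
  by rewrite /shift_out; case: ifP; lia.
- apply/mapP; exists j; first by apply: (h2 _ _ _ hi hk); lia.
  by rewrite /shift_out; case: ifP; lia.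
Qed.

Lemma single_interval_shift_in x u : 0 < x -> single_interval u ->
  single_interval (relabel (shift_in x) u).
Proof.
move=> hx [h1 h2]; split; first by rewrite tlab_relabel size_map.
rewrite labels_relabel => i j k /mapP [i0 hi ->] /mapP [k0 hk ->] hj.
apply/mapP; exists (j + 1 - x); last by rewrite /shift_in in hj *; lia.
by apply: (h2 _ _ _ hi hk); rewrite /shift_in in hj; lia.
Qed.

Lemma interval_graft n x S T : 0 < n -> uniq S -> is_interval S -> x \in S ->
  (forall y, (y \in T) = (x <= y <= x + n - 1)) ->
  is_interval (rem x (map (shift_out n x) S) ++ T).
Proof.
move=> hn hu h hx hT.
have hu' : uniq (map (shift_out n x) S).
  by rewrite map_inj_uniq //; apply: shift_out_inj.
move=> i j k; rewrite !mem_cat !(mem_rem_uniq _ hu') !inE !hT => hi hk hj.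
case: (boolP (x <= j <= x + n - 1)) => hj2; first by rewrite orbT.
apply/orP; left; rewrite (_ : j != x) /=; last by apply/eqP; lia.
case: (ltnP j x) => hjx.
  have /mapP [i0 hi0] : i \in map (shift_out n x) S.
    by case/orP: hi => [/andP [] //|]; lia.
  rewrite /shift_out; case: ifP => hi0x ei; first lia.
  apply/mapP; exists j; first by apply: (h _ _ _ hi0 hx); lia.
  by rewrite /shift_out; case: ifP; lia.
have /mapP [k0 hk0] : k \in map (shift_out n x) S.
  by case/orP: hk => [/andP [] //|]; lia.
rewrite /shift_out; case: ifP => hk0x ek; last lia.
apply/mapP; exists (j - n + 1); first by apply: (h _ _ _ hx hk0); lia.
by rewrite /shift_out; case: ifP; lia.
Qed.

Lemma single_interval_graft n x s T : 0 < n -> single_interval s ->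
  uniq (labels s) -> x \in labels (relabel (shift_out n x) s) ->
  size (tlab T) = 1 -> uniq (labels T) ->
  (forall y, (y \in labels T) = (x <= y <= x + n - 1)) ->
  single_interval (graftW x T (relabel (shift_out n x) s)).
Proof.
move=> hn [hs1 hs2] hus hxs hT1 huT hT.
have hxs0 : x \in labels s.
  move: hxs; rewrite labels_relabel => /mapP [y hy].
  by rewrite /shift_out; case: ifP => ? e; [lia|rewrite e].
have huS : uniq (labels (relabel (shift_out n x) s)).
  by rewrite labels_relabel map_inj_uniq //; apply: shift_out_inj.
split.
  case: s hs1 {hs2 hus hxs hxs0 huS} => L cs /= hL.
  case: ifP => hx /=; last by rewrite size_map.
  by rewrite size_cat size_rem // size_map hL hT1.
have e := labels_graftW T huS hxs; rewrite perm_sym in e.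
by apply: interval_perm e _; rewrite labels_relabel; apply: interval_graft.
Qed.

Section Composition.
Variables (m n x : nat) (t1 t2 : tree).
Hypotheses (g1 : RLS m t1) (g2 : RLS n t2) (hx : 1 <= x <= m).

Let T1 := relabel (shift_out n x) t1.
Let T2 := relabel (shift_in x) t2.

Lemma mem_T2 y : (y \in labels T2) = (x <= y <= x + n - 1).
Proof.
rewrite labels_relabel; apply/mapP/idP => [[y0 h ->]|h].
  by move: h; rewrite (mem_perm_iota _ g2.1) /shift_in; lia.
by exists (y + 1 - x); [rewrite (mem_perm_iota _ g2.1)|rewrite /shift_in]; lia.
Qed.

Lemma mem_T1 y :
  (y \in labels T1) = (1 <= y <= x) || (x + n <= y <= m + n - 1).
Proof.
have hn := RLS_pos g2; rewrite labels_relabel.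
apply/mapP/idP => [[y0 h ->]|h].
  by move: h; rewrite (mem_perm_iota _ g1.1) /shift_out; case: ifP; lia.
rewrite /shift_out; case: (leqP y x) => hyx.
  by exists y; [rewrite (mem_perm_iota _ g1.1)|case: ifP]; lia.
by exists (y - n + 1); [rewrite (mem_perm_iota _ g1.1)|case: ifP]; lia.
Qed.

Lemma uniq_T1 : uniq (labels T1).
Proof.
rewrite labels_relabel map_inj_uniq ?(RLS_uniq g1) //.
exact/shift_out_inj/(RLS_pos g2).
Qed.

Lemma uniq_T2 : uniq (labels T2).
Proof.
rewrite labels_relabel map_inj_uniq ?(RLS_uniq g2) //.
by apply: shift_in_inj; case/andP: hx.
Qed.

Lemma x_in_T1 : x \in labels T1.
Proof. by rewrite mem_T1; have := RLS_pos g2; lia. Qed.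

Lemma labels_comp : perm_eq (labels (graftW x T2 T1)) (iota 1 (m + n - 1)).
Proof.
have hn := RLS_pos g2.
apply: perm_trans (labels_graftW T2 uniq_T1 x_in_T1) _.
have memR y : y \in rem x (labels T1) = (y != x) && (y \in labels T1).
  by rewrite (mem_rem_uniq _ uniq_T1) inE.
apply: uniq_perm; rewrite ?iota_uniq //.
  rewrite cat_uniq rem_uniq ?uniq_T1 ?uniq_T2 ?andbT //; apply/hasPn => y.
  by rewrite mem_T2 memR mem_T1; case: eqP => /=; lia.
by move=> y; rewrite mem_cat memR mem_T1 mem_T2 mem_iota; case: eqP; lia.
Qed.

Lemma RLS_comp : RLS (m + n - 1) (Defs.comp n x t1 t2).
Proof.
have hn := RLS_pos g2; have hx1 : 0 < x by case/andP: hx.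
rewrite comp_W ?(RLS_root g2) // -/T1 -/T2; split; first exact: labels_comp.
move=> u /(nodes_graftW uniq_T1) [[h1 h2]|[[s [hs [hxs ->]]]|[c [hc hu]]]].
- have [u0 [hu0 e]] := nodes_relabel h1; subst u.
  apply: single_interval_shift_out => //; first exact: g1.2.
  apply: contra h2; rewrite labels_relabel => h.
  by apply/mapP; exists x; rewrite /shift_out ?ltnn.
- have [s0 [hs0 es]] := nodes_relabel hs; subst s.
  apply: single_interval_graft => //.
  + exact: g1.2.
  + exact: nodes_uniq hs0 (RLS_uniq g1).
  + by rewrite tlab_relabel size_map (RLS_root g2).
  + exact: uniq_T2.
  + exact: mem_T2.
- have /nodes_relabel [u0 [hu0 ->]] := nodes_trans hu (nodes_tch hc).
  by apply: single_interval_shift_in => //; apply: g2.2.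
Qed.

End Composition.

Lemma single_interval_iota a u : size (tlab u) = 1 ->
  perm_eq (labels u) (iota a (size (labels u))) -> single_interval u.
Proof.
move=> h e; split=> //; rewrite perm_sym in e.
exact: interval_perm e (@interval_iota a _).
Qed.

Lemma gen_RLS n t : gen_prec_succ n t -> RLS n t.
Proof.
elim=> [|||m n' x t1 t2 _ IH1 _ IH2 hx|n' t0 t' _ IH hiso].
- by split=> // u /= [<-|[]]; apply: (@single_interval_iota 1).
- split=> // u /= [<-|[<-|[]]]; first exact: (@single_interval_iota 1).
  exact: (@single_interval_iota 2).
- by split=> // u /= [<-|[<-|[]]]; apply: (@single_interval_iota 1).
- exact: RLS_comp.
- exact: RLS_tiso hiso.
Qed.

Lemma comp_at_leaf n x y t2 : 0 < n -> size (tlab t2) = 1 -> y != x ->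
  Defs.comp n x (Node [:: y] [:: Node [:: x] [::]]) t2 =
  Node [:: shift_out n x y] [:: relabel (shift_in x) t2].
Proof.
move=> hn h2 hyx; rewrite comp_W //= inE.
have -> : (x == shift_out n x y) = false.
  apply/negbTE; apply: contra hyx => /eqP; rewrite /shift_out.
  by case: ifP => hxy h; apply/eqP; lia.
by rewrite /shift_out ltnn inE eqxx /=; case: (relabel _ t2).
Qed.

Lemma comp_at_root n x cs t2 : size (tlab t2) = 1 ->
  Defs.comp n x (Node [:: x] cs) t2 =
  Node (tlab (relabel (shift_in x) t2))
       (map (relabel (shift_out n x)) cs ++ tch (relabel (shift_in x) t2)).
Proof. by move=> h2; rewrite comp_W //= /shift_out ltnn inE eqxx. Qed.

Definition attach (c t : tree) : tree := Node (tlab t) (c :: tch t).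

(* Attaching a generated tree, shifted above all labels of [U]: this is
   [(A_prec o_2 C) o_1 U]. *)
Lemma gen_attach_high p m C U : gen_prec_succ p C -> gen_prec_succ m U ->
  gen_prec_succ (m + p) (attach (relabel (addn m) C) U).
Proof.
move=> hC hU; have gC := gen_RLS hC; have gU := gen_RLS hU.
have h1 := gen_comp gen_prec hC (isT : 1 <= 2 <= 2).
rewrite comp_at_leaf ?(RLS_root gC) ?(RLS_pos gC) // in h1.
have := gen_comp h1 hU (isT : 1 <= 1 <= 2 + p - 1).
rewrite comp_at_root ?(RLS_root gU) //= relabel_comp.
rewrite (relabel_id_in (f := shift_in 1) (t := U)); last first.
  by move=> y _; rewrite /shift_in; lia.
rewrite (relabel_ext_in (g := addn m) (t := C)); last first.
  by move=> y /(RLS_mem gC); rewrite /shift_in /shift_out /=; case: ifP; lia.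
by rewrite (_ : 2 + p - 1 + m - 1 = m + p) //; lia.
Qed.

(* Attaching a generated tree below the root of [U] shifted above all its
   labels: this is [(A_succ o_1 C) o_(p+1) U]. *)
Lemma gen_attach_low p m C U : gen_prec_succ p C -> gen_prec_succ m U ->
  gen_prec_succ (p + m) (attach C (relabel (addn p) U)).
Proof.
move=> hC hU; have gC := gen_RLS hC; have gU := gen_RLS hU.
have hp := RLS_pos gC.
have h1 := gen_comp gen_succ hC (isT : 1 <= 1 <= 2).
rewrite comp_at_leaf ?(RLS_root gC) // relabel_id_in in h1; last first.
  by move=> y _; rewrite /shift_in; lia.
rewrite (_ : shift_out p 1 2 = p.+1) in h1; last by rewrite /shift_out /=; lia.
have hx : 1 <= p.+1 <= 2 + p - 1 by lia.
have := gen_comp h1 hU hx; rewrite comp_at_root ?(RLS_root gU) //.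
rewrite (relabel_ext_in (f := shift_in p.+1) (g := addn p) (t := U)); last first.
  by move=> y _; rewrite /shift_in; lia.
rewrite /= (relabel_id_in (f := shift_out m p.+1) (t := C)); last first.
  by move=> y /(RLS_mem gC); rewrite /shift_out; case: ifP; lia.
by rewrite (_ : 2 + p - 1 + m - 1 = p + m) //; lia.
Qed.

Lemma tiso_child_front L c l1 l2 :
  tiso (Node L (c :: l1 ++ l2)) (Node L (l1 ++ c :: l2)).
Proof.
apply: (tiso_node (cs := c :: l1 ++ l2)) => //.
  by apply: Permutation_sym; apply: Permutation_middle.
by elim: (c :: l1 ++ l2) => [|a l IH]; constructor => //; apply: tiso_refl.
Qed.

Lemma RLS_shift_down d k t : perm_eq (labels t) (iota d.+1 k) ->
  (forall u, In u (nodes t) -> single_interval u) ->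
  RLS k (relabel (subn^~ d) t).
Proof.
move=> hl hP; split.
  rewrite labels_relabel; apply: perm_trans (perm_map _ hl) _.
  by rewrite -addn1 iotaDl -map_comp map_id_in // => y _ /=; lia.
move=> u /nodes_relabel [u0 [hu0 ->]]; have [h1 h2] := hP u0 hu0.
have hd y : y \in labels u0 -> d < y.
  by move=> hy; have := nodes_mem hu0 hy; rewrite (mem_perm_iota _ hl); lia.
split; first by rewrite tlab_relabel size_map.
rewrite labels_relabel => i j l /mapP [i0 hi ->] /mapP [l0 hl0 ->] hj.
have := hd _ hi; have := hd _ hl0 => ? ?.
apply/mapP; exists (j + d); last lia.
by apply: (h2 _ _ _ hi hl0); lia.
Qed.

Lemma perm_iota_low A B q p : perm_eq (A ++ B) (iota 1 (q + p)) ->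
  perm_eq A (iota 1 q) -> perm_eq B (iota q.+1 p).
Proof.
rewrite iotaD add1n => h hA; rewrite -(perm_cat2l (iota 1 q)).
by apply: perm_trans h; rewrite perm_cat2r perm_sym.
Qed.

Lemma perm_iota_high A B q p : perm_eq (A ++ B) (iota 1 (q + p)) ->
  perm_eq A (iota q.+1 p) -> perm_eq B (iota 1 q).
Proof.
rewrite iotaD add1n perm_catC => h hA; rewrite -(perm_cat2r (iota q.+1 p)).
by apply: perm_trans h; rewrite perm_cat2l perm_sym.
Qed.

Lemma split_child n k cs c : RLS n (Node [:: k] cs) -> In c cs ->
  exists l1 l2, let R := Node [:: k] (l1 ++ l2) in
  [/\ cs = l1 ++ c :: l2, perm_eq (labels c ++ labels R) (iota 1 n),
      forall u, In u (nodes c) -> single_interval u &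
      is_interval (labels R) -> forall u, In u (nodes R) -> single_interval u].
Proof.
move=> [hl hP] hc; have [l1 [l2 e]] := in_split _ _ hc; exists l1, l2; split=> //.
- apply: perm_trans hl; rewrite e /= !map_cat !flatten_cat /=.
  by rewrite perm_sym -cat1s catA perm_catCA -catA cat1s.
- by move=> u hu; apply: hP; apply: nodes_child hc hu.
move=> hR u /= [<-|]; first by split.
case/In_flatten_map=> d [/in_app_iff hd hu]; apply: hP; apply: nodes_child hu.
by rewrite e; apply/in_app_iff; case: hd; [left|right; right].
Qed.

Section Decomposition.
Variable n : nat.
Hypothesis IH : forall m t, m < n -> RLS m t -> gen_prec_succ m t.

(* If a child [c] of the root holds the largest label [n], then [c] holds a
   final segment of [1, n] and the tree is obtained by [gen_attach_high]. *)
Lemma gen_top_child k cs c : RLS n (Node [:: k] cs) -> In c cs ->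
  n \in labels c -> gen_prec_succ n (Node [:: k] cs).
Proof.
move=> g hc hnc; have [l1 [l2 [e hperm hPc hPR]]] := split_child g hc.
set R := Node [:: k] (l1 ++ l2) in hperm hPR *.
have hcn : In c (nodes (Node [:: k] cs)) by apply: nodes_child hc (nodes_self c).
set p := size (labels c).
have [a ha] := RLS_node_iota g hcn.
have hsize : p + size (labels R) = n.
  by have := perm_size hperm; rewrite size_cat size_iota.
have hR : 0 < size (labels R) by rewrite /R /=.
have hpos : 0 < p by rewrite /p; case: (labels c) hnc.
have ea : a = (n - p).+1.
  have hlast : a + p - 1 \in labels c by rewrite (mem_perm_iota _ ha); lia.
  have := RLS_mem g (nodes_mem hcn hlast).
  by move: hnc; rewrite (mem_perm_iota _ ha); lia.
rewrite ea in ha.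
have hn : n = (n - p) + p by lia.
have gR : RLS (n - p) R.
  have hlR : perm_eq (labels R) (iota 1 (n - p)).
    by apply: (perm_iota_high (p := p)) ha; rewrite -hn.
  split=> //; apply: hPR; apply: interval_perm (@interval_iota 1 (n - p)).
  by rewrite perm_sym.
have [hp1 hp2] : p < n /\ n - p < n by lia.
have := gen_attach_high (IH hp1 (RLS_shift_down ha hPc)) (IH hp2 gR).
rewrite relabel_comp relabel_id_in -?hn; last first.
  by move=> y; rewrite (mem_perm_iota _ ha) /=; lia.
by move=> h; apply: gen_iso h _; rewrite e; apply: tiso_child_front.
Qed.

(* Symmetrically, a child holding the label [1] holds an initial segment and
   the tree is obtained by [gen_attach_low]. *)
Lemma gen_bottom_child k cs c : RLS n (Node [:: k] cs) -> In c cs ->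
  1 \in labels c -> gen_prec_succ n (Node [:: k] cs).
Proof.
move=> g hc h1c; have [l1 [l2 [e hperm hPc hPR]]] := split_child g hc.
set R := Node [:: k] (l1 ++ l2) in hperm hPR *.
have hcn : In c (nodes (Node [:: k] cs)) by apply: nodes_child hc (nodes_self c).
set p := size (labels c).
have [a ha] := RLS_node_iota g hcn.
have hsize : p + size (labels R) = n.
  by have := perm_size hperm; rewrite size_cat size_iota.
have hR : 0 < size (labels R) by rewrite /R /=.
have hpos : 0 < p by rewrite /p; case: (labels c) h1c.
have ea : a = 1.
  have hfirst : a \in labels c by rewrite (mem_perm_iota _ ha); lia.
  have := RLS_mem g (nodes_mem hcn hfirst).
  by move: h1c; rewrite (mem_perm_iota _ ha); lia.
rewrite ea in ha.
have hn : n = p + (n - p) by lia.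
have hlR : perm_eq (labels R) (iota p.+1 (n - p)).
  by apply: perm_iota_low ha; rewrite -hn.
have hPR' : forall u, In u (nodes R) -> single_interval u.
  apply: hPR; apply: interval_perm (@interval_iota p.+1 (n - p)).
  by rewrite perm_sym.
have gc : RLS p c by split.
have [hp1 hp2] : p < n /\ n - p < n by lia.
have := gen_attach_low (IH hp1 gc) (IH hp2 (RLS_shift_down hlR hPR')).
rewrite relabel_comp relabel_id_in -?hn; last first.
  by move=> y; rewrite (mem_perm_iota _ hlR) /=; lia.
by move=> h; apply: gen_iso h _; rewrite e; apply: tiso_child_front.
Qed.

End Decomposition.

(* Every RLS tree is generated, by strong induction on the number of labels:
   a leaf is the unit, otherwise split off the child holding [n] (if the
   root is [1]) or the child holding [1] (otherwise). *)
Lemma RLS_gen n t : RLS n t -> gen_prec_succ n t.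
Proof.
elim: n {-2}n (leqnn n) t => [|N IHN] n hn t g; first by have := RLS_pos g; lia.
have IH m t' : m < n -> RLS m t' -> gen_prec_succ m t'.
  by move=> hm; apply: IHN; lia.
case: t g => [[|k [|? ?]] cs] g; have := RLS_root g => //= _.
case: cs g => [|c0 cs0] g.
  have := perm_size g.1; rewrite size_iota /= => en; subst n.
  have : k = 1 by have := RLS_mem g (mem_head k _); lia.
  by move=> ->; exact: gen_unit.
have hmem y : 1 <= y <= n -> y != k ->
    exists c, In c (c0 :: cs0) /\ y \in labels c.
  move=> hy hyk; apply: mem_flatten_map.
  by move: hy; rewrite -(mem_perm_iota _ g.1) /= inE (negbTE hyk).
have hn2 : 1 < n.
  have h0 : In c0 (nodes (Node [:: k] (c0 :: cs0))).
    by apply: nodes_child (nodes_self c0); left.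
  have := perm_size g.1; have [hs _] := g.2 c0 h0.
  by rewrite size_iota /= size_cat (labels_node c0) size_cat hs; lia.
case: (eqVneq k 1) => [ek|hk1].
  have [hnn hnk] : 1 <= n <= n /\ n != k.
    by rewrite ek; split; [|apply/eqP]; lia.
  have [c [hc hnc]] := hmem n hnn hnk.
  exact: (gen_top_child IH g hc hnc).
have [h1 h1k] : 1 <= 1 <= n /\ 1 != k by rewrite eq_sym; split; [lia|].
have [c [hc h1c]] := hmem 1 h1 h1k.
exact: (gen_bottom_child IH g hc h1c).
Qed.

Theorem mainTheorem11 (n : nat) (t : tree) :
  gen_prec_succ n t <->
  (RW n t /\ recursively_labelled t /\ one_label_per_node t).
Proof.
rewrite -RLS_iff; split; [exact: gen_RLS|exact: RLS_gen].
Qed.
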